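(* Let $\lambda^\pm>0$, $\mu^\pm>0$, $\hat\lambda=\lambda^+-\lambda^-$, $\hat\mu=\mu^+-\mu^-$, and let $g_n,g_t\in\mathbb R$ satisfy $g_n\in[0,1]$, $(1-g_n)^2-g_t^2\ge0$ and $g_n^2-g_t^2\ge0$. Then the matrix $$\Xi=\begin{bmatrix}\lambda^-+2\mu^-&0\\0&\mu^-\end{bmatrix}+\begin{bmatrix}(\hat\lambda+2\hat\mu)g_n&\hat\lambda g_t\\ \hat\mu g_t&\hat\mu g_n\end{bmatrix}$$ satisfies $\det\Xi>2\big(\min\{\mu^+,\mu^-\}\big)^2$.
   Context: In the paper $g_n=g_n(F_0)$, $g_t=g_t(F_0)$ are the values at a specially chosen point $F_0$ of the auxiliary functions $g_n(X)=\sum_{i\in\mathcal I^-}L(A_i)\nabla\psi_i(X)\cdot\bar{\mathbf n}$, $g_t(X)=\sum_{i\in\mathcal I^-}L(A_i)\nabla\psi_i(X)\cdot\bar{\mathbf t}$ on a rectangular interface element; the statement above is the algebraic content, with the inequalities on $g_n,g_t$ as hypotheses. *)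

From HB Require Import structures.
From mathcomp Require Import all_boot all_order all_algebra.
Set Implicit Arguments. Unset Strict Implicit. Unset Printing Implicit Defensive.
Import Order.TTheory GRing.Theory Num.Theory.
Local Open Scope ring_scope.

Definition mx22 (R : ringType) (a b c d : R) : 'M[R]_2 :=
  \matrix_(i < 2, j < 2)
    (if i == 0 then (if j == 0 then a else b) else (if j == 0 then c else d)).

Definition Xi (R : ringType) (lamp lamm mup mum gn gt : R) : 'M[R]_2 :=
  let lh := lamp - lamm in
  let mh := mup - mum in
  mx22 (lamm + 2 * mum) 0 0 mum
  + mx22 ((lh + 2 * mh) * gn) (lh * gt) (mh * gt) (mh * gn).

(* Writing c = g_n, expansion gives
     det Xi = ((1-c)^2 - g_t^2) lam^- mu^- + (c^2 - g_t^2) lam^+ mu^+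
              + ((1-c) c + g_t^2) (lam^- mu^+ + lam^+ mu^-) + 2 ((1-c) mu^- + c mu^+)^2.
   The three weights are nonnegative and not all zero, so the first three terms are
   positive, and the convex combination (1-c) mu^- + c mu^+ is at least min(mu^+, mu^-). *)

From HB Require Import structures.
From mathcomp Require Import all_boot all_order all_algebra.
From mathcomp Require Import ring lra.
Import Order.TTheory GRing.Theory Num.Theory.
Set Implicit Arguments. Unset Strict Implicit. Unset Printing Implicit Defensive.
Local Open Scope ring_scope.

Lemma det_mx22 (R : comNzRingType) (a b c d : R) :
  \det (mx22 a b c d) = a * d - b * c.
Proof.
rewrite (expand_det_row _ 0) !big_ord_recl big_ord0 /cofactor !det_mx11 !mxE /=.
by rewrite expr0 expr1 mul1r mulN1r addr0 mulrN.
Qed.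

Lemma mx22D (R : nzRingType) (a b c d a' b' c' d' : R) :
  mx22 a b c d + mx22 a' b' c' d' = mx22 (a + a') (b + b') (c + c') (d + d').
Proof. by apply/matrixP=> i j; rewrite !mxE; case: ifP; case: ifP. Qed.

Lemma det_Xi (R : comNzRingType) (lamp lamm mup mum gn gt : R) :
  \det (Xi lamp lamm mup mum gn gt) =
    ((1 - gn) ^+ 2 - gt ^+ 2) * (lamm * mum) + (gn ^+ 2 - gt ^+ 2) * (lamp * mup)
    + ((1 - gn) * gn + gt ^+ 2) * (lamm * mup + lamp * mum)
    + 2 * ((1 - gn) * mum + gn * mup) ^+ 2.
Proof. by rewrite /Xi mx22D det_mx22; ring. Qed.

Lemma ge_min_convex (R : realDomainType) (x y c : R) :
  0 <= c -> c <= 1 -> Num.min x y <= (1 - c) * x + c * y.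
Proof.
move=> c0 c1.
have mx : Num.min x y <= x by rewrite ge_min lexx.
have my : Num.min x y <= y by rewrite ge_min lexx orbT.
nra.
Qed.

Lemma weighted_sum3_gt0 (R : realDomainType) (u v w x y z : R) :
  0 <= u -> 0 <= v -> 0 <= w -> 0 < u + v + w ->
  0 < x -> 0 < y -> 0 < z -> 0 < u * x + v * y + w * z.
Proof.
move=> u0 v0 w0 s0 x0 y0 z0; set m := Num.min x (Num.min y z).
have m0 : 0 < m by rewrite !lt_min x0 y0 z0.
have mx : m <= x by rewrite ge_min lexx.
have my : m <= y by rewrite !ge_min lexx orbT.
have mz : m <= z by rewrite !ge_min lexx !orbT.
have := mulr_gt0 m0 s0; nra.
Qed.

Theorem mainTheorem10 (R : realFieldType) (lamp lamm mup mum gn gt : R) :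
  0 < lamp -> 0 < lamm -> 0 < mup -> 0 < mum ->
  0 <= gn -> gn <= 1 ->
  0 <= (1 - gn) ^+ 2 - gt ^+ 2 ->
  0 <= gn ^+ 2 - gt ^+ 2 ->
  2 * (Num.min mup mum) ^+ 2 < \det (Xi lamp lamm mup mum gn gt).
Proof.
move=> lamp0 lamm0 mup0 mum0 gn0 gn1 gt_le1 gt_le2; rewrite det_Xi.
have weights_gt0 : 0 < ((1 - gn) ^+ 2 - gt ^+ 2) + (gn ^+ 2 - gt ^+ 2)
                       + ((1 - gn) * gn + gt ^+ 2).
  (* the sum exceeds both gn and 1 - gn, using gt^2 <= gn^2 resp. gt^2 <= (1-gn)^2 *)
  by nra.
have mixed_ge0 : 0 <= (1 - gn) * gn + gt ^+ 2.
  by rewrite addr_ge0 ?sqr_ge0 // mulr_ge0 // subr_ge0.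
have := weighted_sum3_gt0 gt_le1 gt_le2 mixed_ge0 weights_gt0
  (mulr_gt0 lamm0 mum0) (mulr_gt0 lamp0 mup0)
  (addr_gt0 (mulr_gt0 lamm0 mup0) (mulr_gt0 lamp0 mum0)).
have min_gt0 : 0 < Num.min mup mum by rewrite lt_min mup0 mum0.
have min_le : Num.min mup mum <= (1 - gn) * mum + gn * mup.
  by rewrite minC ge_min_convex.
have : Num.min mup mum ^+ 2 <= ((1 - gn) * mum + gn * mup) ^+ 2.
  by rewrite ler_sqr ?nnegrE ?(ltW min_gt0) ?(ltW (lt_le_trans min_gt0 min_le)).
lra.
Qed.
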